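(* Let $\mathcal{T}$ be an MPQ-tree of an interval graph $G=(V,E)$, let $(x,y)\in E$ with $x$ over $y$ and $node(x)\neq node(y)$, and suppose the $\langle x,y\rangle$-tree-path is almost rotable and starts in a central section $S_a$ of the Q-node $node(x)$, whose sections are $S_1,\dots,S_k$. Suppose $y$ has no neighbour in $V_a\setminus\{y\}$ (the vertex set of the subtree $T_a$), and at least one of the following holds: (1) there is $b$ with $1<b\le l(x)$ such that $S_a\setminus\{x\}\subseteq S_b$ and $S_{b-1}\cap S_b\subseteq S_a$; (2) there is $b$ with $r(x)\le b<k$ such that $S_a\setminus\{x\}\subseteq S_b$ and $S_b\cap S_{b+1}\subseteq S_a$; (3) $S_a\setminus\{x\}\subseteq S_1$; (4) $S_a\setminus\{x\}\subseteq S_k$. Then $(x,y)$ is an interval edge.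
   Context: Graphs are finite and simple; for $G=(V,E)$ and $e\in E$, $G-e=(V,E\setminus\{e\})$. An edge $(x,y)\in E$ of an interval graph $G$ is an interval edge if $G-(x,y)$ is an interval graph. An MPQ-tree of an interval graph $G=(V,E)$, $V=\{1,\dots,n\}$, is a rooted plane tree whose nodes are P-nodes and Q-nodes. Each P-node carries a (possibly empty) set of vertices. A Q-node has $k\ge 3$ ordered positions $1,\dots,k$; position $i$ carries a set $S_i\subseteq V$ (the $i$-th section) and a child subtree $T_i$, which may be empty. Every vertex $v$ is assigned to exactly one node $node(v)$: either $v$ lies in the set of the P-node $node(v)$, or $node(v)$ is a Q-node and $v$ lies exactly in the sections $S_{l(v)},\dots,S_{r(v)}$ of it, with $l(v)<r(v)$. For a node with child subtrees $T_1,\dots,T_k$, $V_i$ denotes the set of vertices assigned to nodes of $T_i$ ($V_i=\emptyset$ if $T_i$ is empty). The maximal cliques of $G$ are in bijection with the descending paths from the root which at a P-node continue into one of its children (stopping if there is none) and at a Q-node choose a position $i$ and continue into $T_i$ (stopping if $T_i$ is empty); the clique is the union of the sets of the visited P-nodes and the chosen sections. Reading these cliques left to right gives a linear order of the maximal cliques, and the orders obtained this way after arbitrarily permuting children of P-nodes and reversing the positions of Q-nodes are exactly the orders of the maximal cliques of $G$ in which the cliques containing any fixed vertex are consecutive. Moreover, for every Q-node with sections $S_1,\dots,S_k$: (a) $V_1\neq\emptyset$ and $V_k\ne\emptyset$; (b) $S_1\subseteq S_2$ and $S_k\subseteq S_{k-1}$; (c) $S_{i-1}\cap S_i\neq\emptyset$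 for $2\le i\le k$; (d) $S_{i-1}\neq S_i$ for $2\le i\le k$; (e) $(S_i\cap S_{i+1})\setminus S_1\neq\emptyset$ and $(S_{i-1}\cap S_i)\setminus S_k\neq\emptyset$ for $2\le i\le k-1$; (f) $(S_{i-1}\cup V_{i-1})\setminus S_i\neq\emptyset$ and $(S_i\cup V_i)\setminus S_{i-1}\neq\emptyset$ for $2\le i\le k$; and further (g) no empty P-node has an empty P-node as its parent, (h) no P-node has exactly one child whose root is a P-node, (i) every child subtree of a P-node is nonempty. We say $x$ is over $y$ if $node(x)$ is the lowest common ancestor of $node(x)$ and $node(y)$ in $\mathcal{T}$. For $x$ over $y$ with $node(x)\ne node(y)$, the $\langle x,y\rangle$-tree-path is the tree path $node(x)=n_1,n_2,\dots,n_t=node(y)$. For a Q-node with sections $S_1,\dots,S_k$, section $S_a$ is central if $1<a<k$, and for a vertex $v$ of that Q-node it is $v$-central if $l(v)<a<r(v)$ and $v$-non-central if $a\in\{l(v),r(v)\}$. The path goes through a central section if for some $1<i<t$, $n_i$ is a Q-node and $n_{i+1}$ lies in the subtree $T_a$ of a central section $S_a$ of $n_i$. The path starts in a central (resp. non-central) section $S_a$ if $n_1$ is a Q-node and $n_2$ lies in the subtree $T_a$ where $S_a$ is an $x$-central (resp. $x$-non-central) section of $n_1$. It starts in a P-node if $n_1$ is a P-node, and ends in a P-node (resp. Q-node) if $n_t$ is a P-node (resp. Q-node). The path is almost rotable if it does not go through a central section and $n_t$ is a P-node that is a leaf of $\mathcal{T}$; it is rotable if it is almost rotable and it either starts in a P-node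 or starts in a non-central section. *)

From HB Require Import structures.
From mathcomp Require Import all_boot.
Set Implicit Arguments. Unset Strict Implicit. Unset Printing Implicit Defensive.

Section Defs.
Variable V : finType.

Definition simple_graph (E : rel V) : Prop :=
  (forall u v, E u v = E v u) /\ (forall u, ~~ E u u).

(* Interval graph: intersection graph of closed intervals [lo v, hi v]
   (integer endpoints suffice for finite graphs). *)
Definition interval_graph (E : rel V) : Prop :=
  exists lo hi : V -> nat, (forall v, lo v <= hi v) /\
    forall u v, u != v -> E u v = (lo u <= hi v) && (lo v <= hi u).

Definition remove_edge (E : rel V) (x y : V) : rel V :=
  fun u v => E u v && ~~ (((u == x) && (v == y)) || ((u == y) && (v == x))).

Definition interval_edge (E : rel V) (x y : V) : Prop :=
  E x y /\ interval_graph (remove_edge E x y).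

Definition clique (E : rel V) (K : {set V}) : bool :=
  [forall u in K, forall v in K, (u != v) ==> E u v].

Definition maxclique (E : rel V) (K : {set V}) : bool :=
  clique E K && [forall K' : {set V}, (clique E K' && (K \subset K')) ==> (K' == K)].

(* A P-node carries a vertex set and its (ordered) children; a Q-node carries
   its positions 1..k, position i being the pair (S_i, T_i), T_i possibly empty. *)
Inductive mpq : Type :=
| PNode of {set V} & seq mpq
| QNode of seq ({set V} * option mpq).

Definition mpq0 : mpq := PNode set0 [::].
Definition pos0 : {set V} * option mpq := (set0, None).

(* Nodes are addressed by the sequence of (0-based) child indices from the root. *)
Fixpoint subtree (t : mpq) (p : seq nat) : option mpq :=
  match p with
  | [::] => Some t
  | i :: p' =>
    match t with
    | PNode _ cs => if i < size cs then subtree (nth mpq0 cs i) p' else None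
    | QNode ps => match (nth pos0 ps i).2 with
                  | Some c => subtree c p'
                  | None => None
                  end
    end
  end.

Fixpoint allv (t : mpq) : {set V} :=
  match t with
  | PNode X cs => foldr (fun c acc => allv c :|: acc) X cs
  | QNode ps => foldr (fun q acc => q.1 :|: match q.2 with
                                             | Some c => allv c
                                             | None => set0 end :|: acc) set0 ps
  end.

(* Sections and subtree vertex sets of a Q-node, 1-based as in the paper. *)
Definition sec (ps : seq ({set V} * option mpq)) (i : nat) : {set V} :=
  (nth pos0 ps i.-1).1.
Definition Vsub (ps : seq ({set V} * option mpq)) (i : nat) : {set V} :=
  match (nth pos0 ps i.-1).2 with Some c => allv c | None => set0 end.

Definition lpos (v : V) (ps : seq ({set V} * option mpq)) : nat :=
  (find (fun q : {set V} * option mpq => v \in q.1) ps).+1.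
Definition rpos (v : V) (ps : seq ({set V} * option mpq)) : nat :=
  size ps - find (fun q : {set V} * option mpq => v \in q.1) (rev ps).

Definition in_node (v : V) (t : mpq) : bool :=
  match t with
  | PNode X _ => v \in X
  | QNode ps => has (fun q : {set V} * option mpq => v \in q.1) ps
  end.

Definition node_at (T : mpq) (v : V) (p : seq nat) : Prop :=
  exists t, subtree T p = Some t /\ in_node v t.

(* The cliques of the descending paths, read left to right. *)
Fixpoint cliques (t : mpq) : seq {set V} :=
  match t with
  | PNode X cs =>
    if cs is [::] then [:: X]
    else flatten (map (fun c => map (setU X) (cliques c)) cs)
  | QNode ps =>
    flatten (map (fun q => match q.2 with
                           | None => [:: q.1]
                           | Some c => map (setU q.1) (cliques c)
                           end) ps)
  end.

(* Permuting children of P-nodes and reversing Q-nodes (recursively). *)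
Inductive reorder : mpq -> mpq -> Prop :=
| ReorderP X cs cs' (s : seq nat) :
    size cs' = size cs -> perm_eq s (iota 0 (size cs)) ->
    (forall i, i < size cs -> reorder (nth mpq0 cs (nth 0 s i)) (nth mpq0 cs' i)) ->
    reorder (PNode X cs) (PNode X cs')
| ReorderQ ps ps' (rv : bool) :
    size ps' = size ps ->
    (forall i, i < size ps ->
       (nth pos0 ps i).1 = (nth pos0 (if rv then rev ps' else ps') i).1 /\
       (((nth pos0 ps i).2 = None /\ (nth pos0 (if rv then rev ps' else ps') i).2 = None) \/
        exists c c', (nth pos0 ps i).2 = Some c /\
                     (nth pos0 (if rv then rev ps' else ps') i).2 = Some c' /\
                     reorder c c')) ->
    reorder (QNode ps) (QNode ps').

Definition consecutive_clique_order (E : rel V) (s : seq {set V}) : Prop :=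
  uniq s /\ (forall K, maxclique E K = (K \in s)) /\
  forall v i j k, i < j -> j < k -> k < size s ->
    v \in nth set0 s i -> v \in nth set0 s k -> v \in nth set0 s j.

Definition Qnode_props (ps : seq ({set V} * option mpq)) : Prop :=
  let k := size ps in
  let S := sec ps in
  let W := Vsub ps in
  3 <= k /\
   (W 1 != set0 /\ W k != set0) /\
   (S 1 \subset S 2 /\ S k \subset S k.-1) /\
   (forall i, 2 <= i <= k -> S i.-1 :&: S i != set0) /\
   (forall i, 2 <= i <= k -> S i.-1 != S i) /\
   (forall i, 2 <= i <= k.-1 ->
                (S i :&: S i.+1) :\: S 1 != set0 /\ (S i.-1 :&: S i) :\: S k != set0) /\
   (forall i, 2 <= i <= k ->
                (S i.-1 :|: W i.-1) :\: S i != set0 /\ (S i :|: W i) :\: S i.-1 != set0).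

Definition mpq_tree (E : rel V) (T : mpq) : Prop :=
      (forall v, exists! p, node_at T v p) /\
      (forall v p ps, subtree T p = Some (QNode ps) -> in_node v (QNode ps) ->
         lpos v ps < rpos v ps /\
         forall i, 1 <= i <= size ps -> (v \in sec ps i) = (lpos v ps <= i <= rpos v ps)) /\
      (uniq (cliques T) /\ (forall K, maxclique E K = (K \in cliques T))) /\
      (forall s, consecutive_clique_order E s <-> exists T', reorder T T' /\ cliques T' = s) /\
      (forall p ps, subtree T p = Some (QNode ps) -> Qnode_props ps) /\
      (forall p X cs, subtree T p = Some (PNode X cs) ->
         [/\ (X = set0 -> forall i S' cs', subtree T (rcons p i) = Some (PNode S' cs') -> S' != set0),
             ~ (exists S' cs', cs = [:: PNode S' cs']) &
             (forall i, i < size cs -> allv (nth mpq0 cs i) != set0)]).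

(* x over y : node(x) is the lca of node(x), node(y), i.e. a prefix of it. *)
(* The <x,y>-tree-path is node(x) = take (size px) py, ..., take (size py) py = node(y). *)
Definition goes_through_central (T : mpq) (px py : seq nat) : Prop :=
  exists j, [/\ size px < j, j < size py &
    exists ps, subtree T (take j py) = Some (QNode ps) /\
               0 < nth 0 py j < (size ps).-1].

Definition almost_rotable (T : mpq) (px py : seq nat) : Prop :=
  ~ goes_through_central T px py /\ exists X, subtree T py = Some (PNode X [::]).

Definition starts_in_central (T : mpq) (x : V) (px py : seq nat)
    (ps : seq ({set V} * option mpq)) (a : nat) : Prop :=
  [/\ subtree T px = Some (QNode ps), a = (nth 0 py (size px)).+1 &
      lpos x ps < a < rpos x ps].

End Defs.

(* The maximal cliques of G, read off the MPQ-tree from left to right, form a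
   sequence in which each vertex occupies consecutive cliques, i.e. an interval
   model of G.  To delete the edge xy it suffices to find a clique C_g containing
   every neighbour of y other than x, such that every vertex common to C_(g-1)
   and C_g is a neighbour of y other than x (or the mirror condition with
   C_(g+1)): shrink y to a point between C_(g-1) and C_g and stretch the
   neighbours of y starting at C_g back to that point.
   In cases (1) and (3) (where b = 1) let C_g be the first clique whose path
   passes through the section S_b of node(x).  A neighbour of y lies above
   node(x) on the path of y, or in S_a minus x, which is inside S_b, or in T_a,
   which is excluded; so it lies in C_g.  A vertex common to C_(g-1) and C_g
   lies above node(x), hence is adjacent to y, or in node(x), where C_(g-1)
   passes through an earlier section; then it lies in S_(b-1) and S_b, hence in
   S_a, and it is not x because b <= l(x).  Cases (2) and (4) are the mirror
   image, with the last clique through S_b. *)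

From mathcomp Require Import all_boot zify.
Set Implicit Arguments. Unset Strict Implicit. Unset Printing Implicit Defensive.

Lemma In_nth (T : Type) (x0 : T) (s : seq T) i : i < size s -> List.In (nth x0 s i) s.
Proof. by elim: s i => [|a s IH] [|i] //= h; [left | right; exact: IH]. Qed.

Lemma take_succ_rcons (d p : seq nat) c : take (size p).+1 d = rcons p c ->
  [/\ size p < size d, take (size p) d = p & nth 0 d (size p) = c].
Proof.
move=> e; have sd : size p < size d.
  by have := congr1 size e; rewrite size_rcons size_take_min; lia.
split => //.
  by rewrite -(take_takel d (leqnSn (size p))) e -cats1 take_size_cat.
by rewrite -(nth_take 0 (ltnSn (size p)) d) e nth_rcons ltnn eqxx.
Qed.

Lemma exists_nth_boundary (T : Type) (x0 : T) (P : pred T) (l : seq T) i0 :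
  P (nth x0 l i0) -> ~~ P x0 -> exists i, P (nth x0 l i) && ~~ P (nth x0 l i.+1).
Proof.
move=> h0 nx; move Hk: (size l - i0) => k; elim: k i0 Hk h0 => [|k IH] i0 Hk h0.
  by move: h0; rewrite nth_default ?(negbTE nx) //; lia.
case h1: (P (nth x0 l i0.+1)); last by exists i0; rewrite h0 h1.
by apply: (IH i0.+1) => //; lia.
Qed.

Section CliquePath.
Variable V : finType.

Definition clique_path (E : rel V) (s : seq {set V}) : Prop :=
  [/\ forall u v, u != v -> E u v = has (fun K : {set V} => (u \in K) && (v \in K)) s,
      forall v, has (fun K : {set V} => v \in K) s &
      forall v i j k, i < j -> j < k -> k < size s ->
        v \in nth set0 s i -> v \in nth set0 s k -> v \in nth set0 s j].

Lemma clique_path_rev E s : clique_path E s -> clique_path E (rev s).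
Proof.
case=> Hedge Hcover Hcons; split=> [u v uv|v|v i j k ij jk].
- by rewrite has_rev Hedge.
- by rewrite has_rev.
rewrite size_rev => ks; rewrite !nth_rev; try lia.
by move=> hi hk; apply: (Hcons v (size s - k.+1) _ (size s - i.+1)) => //; lia.
Qed.

Lemma clique_maxclique (E : rel V) (C : {set V}) :
  clique E C -> exists2 K, maxclique E K & C \subset K.
Proof.
move=> cC; pose P K := clique E K && (C \subset K).
have PC : P C by rewrite /P cC subxx.
have [K /andP[cK CK] Kmax] := @arg_maxnP _ C P (fun K => #|K|) PC.
exists K => //; rewrite /maxclique cK; apply/forallP => K'; apply/implyP => /andP[cK' KK'].
by rewrite eq_sym eqEcard KK' /=; apply: Kmax; rewrite /P cK' (subset_trans CK KK').
Qed.

Lemma clique_set1 (E : rel V) v : clique E [set v].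
Proof.
apply/forallP => u; apply/implyP => /set1P->; apply/forallP => w.
by apply/implyP => /set1P->; rewrite eqxx.
Qed.

Lemma clique_pair (E : rel V) u v :
  simple_graph E -> E u v -> clique E [set u; v].
Proof.
case=> Esym _ Euv; apply/forallP => w; apply/implyP => hw; apply/forallP => w'.
apply/implyP => hw'; apply/implyP.
by move: hw hw'; rewrite !inE => /orP[]/eqP-> /orP[]/eqP->; rewrite ?eqxx // Esym.
Qed.

Lemma clique_path_of_consecutive_order (E : rel V) s :
  simple_graph E -> consecutive_clique_order E s -> clique_path E s.
Proof.
move=> HE [_ [Hmax Hcons]]; split=> // [u v uv|v].
- apply/idP/hasP => [Euv|[K sK /andP[uK vK]]].
    have [K] := clique_maxclique (clique_pair HE Euv); rewrite Hmax => sK uvK.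
    by exists K => //; rewrite !(subsetP uvK) // !inE eqxx ?orbT.
  rewrite -Hmax in sK; case/andP: sK => /forallP/(_ u)/implyP/(_ uK).
  by move=> /forallP/(_ v)/implyP/(_ vK)/implyP/(_ uv).
- have [K] := clique_maxclique (clique_set1 E v).
  by rewrite Hmax => sK vK; apply/hasP; exists K; rewrite // (subsetP vK) ?inE.
Qed.

Section Gap.
Variables (E : rel V) (s : seq {set V}) (x y : V).
Hypotheses (HE : simple_graph E) (Hs : clique_path E s) (Exy : E x y).

Definition first_clique v := find (fun K : {set V} => v \in K) s.
Definition last_clique v := (size s).-1 - find (fun K : {set V} => v \in K) (rev s).

Lemma last_clique_lt v : last_clique v < size s.
Proof. by case: Hs => _ Hcover _; have := Hcover v; rewrite has_find /last_clique; lia. Qed.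

Lemma mem_clique_path v k :
  k < size s -> (v \in nth set0 s k) = (first_clique v <= k <= last_clique v).
Proof.
case: Hs => _ Hcover Hcons ks.
have hv := Hcover v.
have hr : has (fun K : {set V} => v \in K) (rev s) by rewrite has_rev.
have fs : first_clique v < size s by rewrite /first_clique -has_find.
have rs : find (fun K : {set V} => v \in K) (rev s) < size s by rewrite -size_rev -has_find.
have vfirst := nth_find set0 hv.
have vlast := nth_find set0 hr; rewrite nth_rev // in vlast.
have eL : size s - (find (fun K : {set V} => v \in K) (rev s)).+1 = last_clique v.
  by rewrite /last_clique; lia.
rewrite eL in vlast.
apply/idP/andP => [vk|[fk kl]]; first split.
- by rewrite leqNgt; apply/negP => /(before_find set0); rewrite vk.
- rewrite leqNgt; apply/negP => lk.
  have : size s - k.+1 < find (fun K : {set V} => v \in K) (rev s).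
    by rewrite /last_clique in lk; lia.
  move/(before_find set0); rewrite nth_rev; last lia.
  have -> : size s - (size s - k.+1).+1 = k by lia.
  by rewrite vk.
case: (ltngtP (first_clique v) k) fk => [fk _|kf|<- _ //]; last by lia.
case: (ltngtP k (last_clique v)) kl => [kl _|lk|-> _ //]; last by lia.
exact: Hcons fk kl (last_clique_lt v) vfirst vlast.
Qed.

Lemma first_le_last_clique v : first_clique v <= last_clique v.
Proof.
case: Hs => _ Hcover _.
have fs : first_clique v < size s by rewrite /first_clique -has_find.
by have := nth_find set0 (Hcover v); rewrite -/(first_clique v) mem_clique_path //; lia.
Qed.

Lemma clique_path_edgeE u v : u != v ->
  E u v = (first_clique u <= last_clique v) && (first_clique v <= last_clique u).
Proof.
case: Hs => Hedge _ _ uv; rewrite Hedge //.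
have := last_clique_lt u; have := first_le_last_clique u; have := first_le_last_clique v.
move=> *; apply/idP/idP.
- by case/(has_nthP set0) => k ks /andP[]; rewrite !mem_clique_path //; lia.
- move=> h; apply/(has_nthP set0); exists (maxn (first_clique u) (first_clique v)); first lia.
  by rewrite !mem_clique_path; lia.
Qed.

(* Clique [k] occupies the point [2k+1]; [y] becomes the point [2g]. *)
Lemma interval_edge_of_left_gap g :
  (forall z, z != y -> z != x -> E y z -> z \in nth set0 s g) ->
  (forall z, z != y -> 0 < g -> z \in nth set0 s g.-1 -> z \in nth set0 s g ->
     E y z && (z != x)) ->
  interval_edge E x y.
Proof.
move=> Hin Hmeet; split => //.
case: HE => Esym Eirr.
have xy : x != y by apply: contraTneq Exy => ->; exact: Eirr.
pose stretched v := [&& first_clique v == g, E y v, v != x & v != y].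
pose lo v := if v == y then g.*2 else (first_clique v).*2.+1 - stretched v.
pose hi v := if v == y then g.*2 else (last_clique v).*2.+1.
have Ey v : v != y -> E y v && (v != x) = (g.*2 <= hi v) && (lo v <= g.*2).
  move=> vy; rewrite /lo /hi (negbTE vy).
  have := first_le_last_clique v.
  case ev: (stretched v).
    by move: ev => /and4P[/eqP f -> -> _]; lia.
  move=> _; apply/idP/idP => [/andP[Eyv vx]|h].
  - have hv := Hin v vy vx Eyv.
    have gs : g < size s by rewrite ltnNge; apply: contraTN hv => h; rewrite nth_default // inE.
    rewrite mem_clique_path // in hv.
    have : first_clique v != g by apply: contraFneq ev => e; rewrite /stretched e eqxx Eyv vx vy.
    lia.
  - have gs : g < size s by have := last_clique_lt v; lia.
    by apply: Hmeet => //; [lia | rewrite mem_clique_path; lia | rewrite mem_clique_path; lia].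
exists lo, hi; split=> [v|u v uv].
  by rewrite /lo /hi; case: ifP => // _; have := first_le_last_clique v; lia.
have yx : (y == x) = false by rewrite eq_sym (negbTE xy).
rewrite /remove_edge; case: (eqVneq u y) => [uy|uy]; first subst u.
  by rewrite eq_sym in uv; rewrite yx /= (Ey v uv) /lo /hi eqxx.
case: (eqVneq v y) => [vy|vy]; first subst v.
  by rewrite andbT /= orbF Esym (Ey u uy) /lo /hi eqxx (negbTE uy) andbC.
rewrite !andbF orbF andbT clique_path_edgeE // /lo /hi (negbTE uy) (negbTE vy).
have := first_le_last_clique u; have := first_le_last_clique v.
by case: (stretched u); case: (stretched v) => /=; lia.
Qed.

End Gap.

Lemma interval_edge_of_right_gap (E : rel V) s x y g :
  simple_graph E -> clique_path E s -> E x y -> g < size s ->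
  (forall z, z != y -> z != x -> E y z -> z \in nth set0 s g) ->
  (forall z, z != y -> g.+1 < size s -> z \in nth set0 s g -> z \in nth set0 s g.+1 ->
     E y z && (z != x)) ->
  interval_edge E x y.
Proof.
move=> HE /clique_path_rev Hs Exy gs Hin Hmeet.
apply: (interval_edge_of_left_gap HE Hs Exy (g := size s - g.+1)).
- move=> z zy zx Eyz; rewrite nth_rev; last lia.
  have -> : size s - (size s - g.+1).+1 = g by lia.
  exact: Hin.
- move=> z zy g0; rewrite !nth_rev; try lia.
  have -> : size s - (size s - g.+1).+1 = g by lia.
  have -> : size s - (size s - g.+1).-1.+1 = g.+1 by lia.
  by move=> h1 h2; apply: Hmeet => //; lia.
Qed.

End CliquePath.

Section Descents.
Variable V : finType.
Notation mpq := (mpq V).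
Notation mpq0 := (mpq0 V).
Notation pos0 := (pos0 V).

Section NestedInduction.
Variable P : mpq -> Prop.
Hypothesis HP : forall X cs, (forall c, List.In c cs -> P c) -> P (PNode X cs).
Hypothesis HQ : forall ps,
  (forall q, List.In q ps -> if q.2 is Some c then P c else True) -> P (QNode ps).

Fixpoint mpq_nested_ind (t : mpq) : P t :=
  match t with
  | PNode X cs => HP X ((fix children (cs : seq mpq) : forall c, List.In c cs -> P c :=
      match cs with
      | [::] => fun c F => False_ind _ F
      | c0 :: cs' => fun c H => match H with
          | or_introl e => eq_ind c0 P (mpq_nested_ind c0) c e
          | or_intror H' => children cs' c H'
          end
      end) cs)
  | QNode ps => HQ ((fix positions (ps : seq ({set V} * option mpq)) :
        forall q, List.In q ps -> if q.2 is Some c then P c else True :=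
      match ps with
      | [::] => fun q F => False_ind _ F
      | q0 :: ps' => fun q H => match H with
          | or_introl e =>
            eq_ind q0 (fun q => if q.2 is Some c then P c else True)
              (match q0 as q return if q.2 is Some c then P c else True with
               | (_, Some c) => mpq_nested_ind c
               | (_, None) => I
               end) q e
          | or_intror H' => positions ps' q H'
          end
      end) ps)
  end.

End NestedInduction.

Lemma reorder_refl (t : mpq) : reorder t t.
Proof.
elim/mpq_nested_ind: t => [X cs IH|ps IH].
- apply: (@ReorderP V X cs cs (iota 0 (size cs))) => // i ics.
  by rewrite nth_iota // add0n; apply/IH/In_nth.
- apply: (@ReorderQ V ps ps false) => // i ips; split => //.
  have := IH _ (In_nth pos0 ips).
  case: (nth pos0 ps i).2 => [c|] hc; [right | left] => //.
  by exists c, c.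
Qed.

Lemma subtree_cat (t : mpq) (p q : seq nat) :
  subtree t (p ++ q) = if subtree t p is Some t' then subtree t' q else None.
Proof.
elim: p t => [|i p IH] [X cs|ps] //=; first by case: ifP.
by case: (nth pos0 ps i).2.
Qed.

(* Descents: the descending paths of the paper, encoded by their child indices. *)
Fixpoint child_descents (f : mpq -> seq (seq nat)) (n : nat) (cs : seq mpq) :=
  if cs is c :: cs' then map (cons n) (f c) ++ child_descents f n.+1 cs' else [::].

Definition option_descents (f : mpq -> seq (seq nat)) (o : option mpq) :=
  if o is Some c then f c else [:: [::]].

Fixpoint position_descents (f : mpq -> seq (seq nat)) (n : nat)
    (ps : seq ({set V} * option mpq)) :=
  if ps is q :: ps' then map (cons n) (option_descents f q.2) ++ position_descents f n.+1 ps'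
  else [::].

Fixpoint descents (t : mpq) : seq (seq nat) :=
  match t with
  | PNode X cs => if cs is [::] then [:: [::]] else child_descents descents 0 cs
  | QNode ps => position_descents descents 0 ps
  end.

Fixpoint path_clique (d : seq nat) (t : mpq) : {set V} :=
  match d, t with
  | [::], PNode X _ => X
  | [::], QNode _ => set0
  | i :: d', PNode X cs => X :|: (if i < size cs then path_clique d' (nth mpq0 cs i) else set0)
  | i :: d', QNode ps => (nth pos0 ps i).1 :|:
      (if (nth pos0 ps i).2 is Some c then path_clique d' c else set0)
  end.

Lemma cliques_descents t : cliques t = map (path_clique^~ t) (descents t).
Proof.
elim/mpq_nested_ind: t => [X [|c0 cs0] IH|ps IH] //.
- have gen pre suf : (forall c, List.In c suf -> cliques c = map (path_clique^~ c) (descents c)) ->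
     map (path_clique^~ (PNode X (pre ++ suf))) (child_descents descents (size pre) suf) =
     flatten (map (fun c => map (setU X) (cliques c)) suf).
    elim: suf pre => [|c suf IH1] pre //= H.
    rewrite map_cat -map_comp (H c (or_introl erefl)) -map_comp.
    rewrite -[(size pre).+1](size_rcons pre c) -(IH1 (rcons pre c)); last first.
      by move=> c' h; apply: H; right.
    rewrite cat_rcons; congr (_ ++ _); apply: eq_map => d /=.
    by rewrite size_cat /= nth_cat ltnn subnn addnS ltnS leq_addr.
  by rewrite (gen [::]).
- have gen ps0 ps1 : (forall q, List.In q ps1 ->
       if q.2 is Some c then cliques c = map (path_clique^~ c) (descents c) else True) ->
     map (path_clique^~ (QNode (ps0 ++ ps1))) (position_descents descents (size ps0) ps1) =
     flatten (map (fun q => if q.2 is Some c then map (setU q.1) (cliques c) else [:: q.1]) ps1).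
    elim: ps1 ps0 => [|[S o] ps1 IH1] ps0 //= H.
    rewrite map_cat -[(size ps0).+1](size_rcons ps0 (S, o)) -(IH1 (rcons ps0 (S, o))); last first.
      by move=> q h; apply: H; right.
    rewrite cat_rcons; congr (_ ++ _).
    case: o H => [c|] H /=; last by rewrite nth_cat ltnn subnn /= setU0.
    rewrite (H (S, Some c) (or_introl erefl)) -!map_comp; apply: eq_map => d /=.
    by rewrite nth_cat ltnn subnn.
  by rewrite (gen [::]).
Qed.


Lemma nth_cliques_descents t k : k < size (descents t) ->
  nth set0 (cliques t) k = path_clique (nth [::] (descents t) k) t.
Proof. by move=> kt; rewrite cliques_descents (nth_map [::]). Qed.

Definition mem_at_level (t : mpq) (d : seq nat) (j : nat) (v : V) : bool :=
  match subtree t (take j d) with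
  | Some (PNode X _) => v \in X
  | Some (QNode ps) => (j < size d) && (v \in (nth pos0 ps (nth 0 d j)).1)
  | None => false
  end.

Lemma mem_at_level_cons t i d j v :
  mem_at_level t (i :: d) j.+1 v =
  match t with
  | PNode X cs => if i < size cs then mem_at_level (nth mpq0 cs i) d j v else false
  | QNode ps => if (nth pos0 ps i).2 is Some c then mem_at_level c d j v else false
  end.
Proof.
by rewrite /mem_at_level /=; case: t => [X cs|ps] /=; [case: ifP | case: (nth pos0 ps i).2].
Qed.

Lemma path_cliqueP d t v :
  (v \in path_clique d t) = [exists j : 'I_(size d).+1, mem_at_level t d j v].
Proof.
elim: d t => [|i d IH] t.
  apply/idP/existsP => [h|[j]]; last by rewrite /mem_at_level (ord1 j); case: t.
  by exists ord0; rewrite /mem_at_level; case: t h => [X cs|ps] //=; rewrite inE.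
apply/idP/existsP => [|[j]].
- case: t => [X cs|ps] /=; rewrite inE => /orP[h|].
  + by exists ord0.
  + case: ifP => ics; last by rewrite inE.
    by rewrite IH => /existsP[j hj]; exists (lift ord0 j); rewrite /= mem_at_level_cons ics.
  + by exists ord0; rewrite /mem_at_level /= h.
  + case e: (nth pos0 ps i).2 => [c|]; last by rewrite inE.
    by rewrite IH => /existsP[j hj]; exists (lift ord0 j); rewrite /= mem_at_level_cons e.
case: t => [X cs|ps] /=; case: (unliftP ord0 j) => [j'|] ->.
- rewrite /= mem_at_level_cons; case: ifP => // ics h.
  by rewrite inE IH; apply/orP; right; apply/existsP; exists j'.
- by rewrite /mem_at_level /= inE => ->.
- rewrite /= mem_at_level_cons; case e: (nth pos0 ps i).2 => [c|] // h.
  by rewrite inE IH; apply/orP; right; apply/existsP; exists j'.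
- by rewrite /mem_at_level /= inE => ->.
Qed.

Lemma mem_path_clique_level t d j v :
  j <= size d -> mem_at_level t d j v -> v \in path_clique d t.
Proof.
by move=> jd h; rewrite path_cliqueP; apply/existsP; exists (Ordinal (jd : j < (size d).+1)).
Qed.

Fixpoint lex_lt (u v : seq nat) : bool :=
  match u, v with
  | a :: u', b :: v' => (a < b) || ((a == b) && lex_lt u' v')
  | _, _ => false
  end.

Lemma lex_lt_nth_le n u v : lex_lt u v -> take n u = take n v ->
  n < size u -> n < size v -> nth 0 u n <= nth 0 v n.
Proof.
elim: n u v => [|n IH] [|a u] [|b v] //=; first by case/orP => [/ltnW|/andP[/eqP ->]].
by move=> + [ab]; rewrite ab ltnn eqxx /=; apply: IH.
Qed.

Lemma child_descents_head f m cs d :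
  d \in child_descents f m cs -> exists b d', d = b :: d' /\ m <= b.
Proof.
elim: cs m => [|c cs IH] m //=; rewrite mem_cat => /orP[/mapP[e _ ->]|/IH[b [d' [-> mb]]]].
  by exists m, e.
by exists b, d'; split => //; lia.
Qed.

Lemma position_descents_head f m ps d :
  d \in position_descents f m ps -> exists b d', d = b :: d' /\ m <= b.
Proof.
elim: ps m => [|q ps IH] m //=; rewrite mem_cat => /orP[/mapP[e _ ->]|/IH[b [d' [-> mb]]]].
  by exists m, e.
by exists b, d'; split => //; lia.
Qed.

Lemma pairwise_lex_lt_cons n s : pairwise lex_lt (map (cons n) s) = pairwise lex_lt s.
Proof. by rewrite pairwise_map; apply: eq_pairwise => u v /=; rewrite ltnn eqxx. Qed.

Lemma allrel_lex_lt_cons n s1 s2 :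
  (forall d, d \in s2 -> exists b d', d = b :: d' /\ n < b) ->
  allrel lex_lt (map (cons n) s1) s2.
Proof. by move=> H; apply/allrelP => _ v /mapP[e _ ->] /H[b [d' [-> nb]]] /=; rewrite nb. Qed.

Lemma descents_sorted t : pairwise lex_lt (descents t).
Proof.
elim/mpq_nested_ind: t => [X [|c0 cs0] IH|ps IH] //.
- have gen n cs : (forall c, List.In c cs -> pairwise lex_lt (descents c)) ->
      pairwise lex_lt (child_descents descents n cs).
    elim: cs n => [|c cs IHcs] n //= H.
    rewrite pairwise_cat pairwise_lex_lt_cons H /=; last by left.
    rewrite IHcs; last by move=> c' h; apply: H; right.
    by rewrite andbT; apply: allrel_lex_lt_cons => d /child_descents_head.
  exact: gen.
- have gen n (ps' : seq ({set V} * option mpq)) : (forall q, List.In q ps' ->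
        if q.2 is Some c then is_true (pairwise lex_lt (descents c)) else True) ->
      pairwise lex_lt (position_descents descents n ps').
    elim: ps' n => [|[S o] ps' IHps] n //= H.
    rewrite pairwise_cat pairwise_lex_lt_cons IHps; last by move=> q h; apply: H; right.
    rewrite andbT allrel_lex_lt_cons; last by move=> d /position_descents_head.
    by case: o H => [c|] // H; apply: (H (S, Some c)); left.
  exact: gen.
Qed.

Lemma child_descents_mem f n cs i e :
  i < size cs -> e \in f (nth mpq0 cs i) -> (n + i) :: e \in child_descents f n cs.
Proof.
elim: cs n i => [|c cs IH] n [|i] //= ics he; rewrite mem_cat.
  by rewrite addn0 map_f.
by rewrite -addSnnS IH ?orbT.
Qed.

Lemma position_descents_mem f n ps i e : i < size ps ->
  e \in option_descents f (nth pos0 ps i).2 -> (n + i) :: e \in position_descents f n ps.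
Proof.
elim: ps n i => [|q ps IH] n [|i] //= ips he; rewrite mem_cat.
  by rewrite addn0 map_f.
by rewrite -addSnnS IH ?orbT.
Qed.

Lemma descents_subtree T p t d :
  subtree T p = Some t -> d \in descents t -> p ++ d \in descents T.
Proof.
elim: p T => [|i p IH] T /=; first by case=> ->.
case: T => [X cs|ps].
- case: ifP => // ics st /(IH _ st).
  by case: cs ics {st} => // c0 cs0 ics; apply: (child_descents_mem 0).
- case e: (nth pos0 ps i).2 => [c|] // st hd.
  have ips : i < size ps by rewrite ltnNge; apply/negP => h; move: e; rewrite nth_default.
  by apply: (position_descents_mem 0) => //; rewrite e; apply: IH st hd.
Qed.

Definition Qnodes_nonempty (t : mpq) :=
  forall q ps, subtree t q = Some (QNode ps) -> 0 < size ps.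

Lemma descents_neq_nil t : Qnodes_nonempty t -> descents t != [::].
Proof.
elim/mpq_nested_ind: t => [X [|c0 cs0] IH|ps IH] H //=.
- have : descents c0 != [::].
    by apply: IH; [left | move=> q ps hq; apply: (H (0 :: q))].
  by case: (descents c0).
- case: ps IH H (H [::] ps erefl) => [|[S [c|]] ps] //= IH H _.
  have : descents c != [::].
    by apply: (IH (S, Some c)); [left | move=> q ps' hq; apply: (H (0 :: q))].
  by case: (descents c).
Qed.

Lemma exists_descent_through T p ps b : Qnodes_nonempty T ->
  subtree T p = Some (QNode ps) -> 0 < b <= size ps ->
  exists2 d, d \in descents T & take (size p).+1 d = rcons p b.-1.
Proof.
move=> HQ st hb.
have ips : b.-1 < size ps by lia.
have [e he] : exists e, e \in option_descents descents (nth pos0 ps b.-1).2.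
  case eo: (nth pos0 ps b.-1).2 => [c|] /=; last by exists [::]; rewrite inE.
  have : descents c != [::].
    apply: descents_neq_nil => q ps' hq; apply: (HQ (p ++ b.-1 :: q)).
    by rewrite subtree_cat st /= eo.
  by case: (descents c) => [|e ?] // _; exists e; rewrite inE eqxx.
exists (p ++ b.-1 :: e).
  by apply: (descents_subtree st); apply: (position_descents_mem 0).
by rewrite -cat_rcons -[(size p).+1](size_rcons p b.-1) take_size_cat.
Qed.

Lemma mem_allv_PNode X cs v :
  (v \in allv (PNode X cs)) = (v \in X) || has (fun c : mpq => v \in allv c) cs.
Proof. by elim: cs => [|c cs IH] /=; rewrite ?orbF // inE IH orbCA. Qed.

Lemma mem_allv_QNode ps v : (v \in allv (QNode ps)) =
  has (fun q : {set V} * option mpq =>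
         (v \in q.1) || if q.2 is Some c then v \in allv c else false) ps.
Proof. by elim: ps => [|[S [c|]] ps IH] /=; rewrite !inE ?IH ?orbA // orbF. Qed.

Lemma allv_subtree (t t' : mpq) p v : subtree t p = Some t' -> in_node v t' -> v \in allv t.
Proof.
elim: p t => [|i p IH] [X cs|ps] /=.
- by case=> <- /= vX; rewrite mem_allv_PNode vX.
- case=> <- /= /(has_nthP pos0)[k kps vk]; rewrite mem_allv_QNode.
  by apply/(has_nthP pos0); exists k => //; rewrite vk.
- case: ifP => // ics st /(IH _ st) v_in; rewrite mem_allv_PNode.
  by apply/orP; right; apply/(has_nthP mpq0); exists i.
- case e: (nth pos0 ps i).2 => [c|] // st /(IH _ st) v_in; rewrite mem_allv_QNode.
  have ips : i < size ps by rewrite ltnNge; apply/negP => h; move: e; rewrite nth_default.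
  by apply/(has_nthP pos0); exists i => //; rewrite e v_in orbT.
Qed.

Lemma mem_at_level_take t d j v : mem_at_level t (take j.+1 d) j v = mem_at_level t d j v.
Proof.
rewrite /mem_at_level take_takel // size_take_min.
case: subtree => [[X cs|ps]|] //; case: (ltnP j (size d)) => jd.
  by rewrite (minn_idPl jd) ltnSn nth_take.
by rewrite (minn_idPr (leqW jd)) ltnNge jd.
Qed.

Lemma mem_at_level_subtree t d j v :
  mem_at_level t d j v -> exists2 t', subtree t (take j d) = Some t' & in_node v t'.
Proof.
rewrite /mem_at_level; case: subtree => [[X cs|ps]|] // h; first by exists (PNode X cs).
exists (QNode ps) => //=.
case/andP: h => _ h; apply/(has_nthP pos0); exists (nth 0 d j) => //.
by rewrite ltnNge; apply: contraTN h => h; rewrite nth_default // inE.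
Qed.

End Descents.

Section MPQTree.
Variables (V : finType) (E : rel V) (T : mpq V).
Hypotheses (HE : simple_graph E) (HT : mpq_tree E T).

Lemma mpq_clique_path : clique_path E (cliques T).
Proof.
apply: clique_path_of_consecutive_order => //.
by case: HT => _ [_ [_ [Horders _]]]; apply/Horders; exists T; split; first exact: reorder_refl.
Qed.

Lemma mpq_Qnodes_nonempty : Qnodes_nonempty T.
Proof.
move=> q ps st; case: HT => _ [_ [_ [_ [HQ _]]]].
by case: (HQ _ _ st) => h _; lia.
Qed.

Lemma exists_node_at v : exists p, node_at T v p.
Proof. by case: HT => Hnode _; case: (Hnode v) => p []; exists p. Qed.

Lemma node_at_uniq v p p' : node_at T v p -> node_at T v p' -> p = p'.
Proof.
by case: HT => Hnode _; case: (Hnode v) => p0 [_ H] h h'; rewrite -(H _ h) -(H _ h').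
Qed.

Lemma mem_path_clique_node d v p : v \in path_clique d T -> node_at T v p ->
  [/\ size p <= size d, take (size p) d = p & mem_at_level T d (size p) v].
Proof.
rewrite path_cliqueP => /existsP[j hj] hp.
have [t' st hv] := mem_at_level_subtree hj.
have <- := node_at_uniq (ex_intro _ t' (conj st hv)) hp.
by rewrite size_takel ?hj // -ltnS ltn_ord.
Qed.

Lemma take_path_clique_node d v p n : v \in path_clique d T -> node_at T v p ->
  n <= size p -> take n d = take n p.
Proof. by move=> hv hp np; have [_ <- _] := mem_path_clique_node hv hp; rewrite take_takel. Qed.

Lemma mem_path_clique_take d d' v p : node_at T v p -> v \in path_clique d T ->
  take (size p).+1 d' = take (size p).+1 d -> v \in path_clique d' T.
Proof.
move=> hp /mem_path_clique_node /(_ hp) [pd _ hv] e.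
apply: (mem_path_clique_level (j := size p)).
  by have := congr1 size e; rewrite !size_take_min; lia.
by rewrite -mem_at_level_take e mem_at_level_take.
Qed.

Lemma mem_sec_range v p ps i : node_at T v p -> subtree T p = Some (QNode ps) ->
  1 <= i <= size ps -> (v \in sec ps i) = (lpos v ps <= i <= rpos v ps).
Proof.
case=> t [st hv]; rewrite st => -[et] hi; subst t.
case: HT => _ [Hlr _].
by case: (Hlr v p ps st hv) => _ ->.
Qed.

Lemma mem_sec_between v p ps i j k : node_at T v p -> subtree T p = Some (QNode ps) ->
  0 < i <= j -> j <= k <= size ps -> v \in sec ps i -> v \in sec ps k -> v \in sec ps j.
Proof.
move=> hv st /andP[i0 ij] /andP[jk ks].
by rewrite !(mem_sec_range hv st); lia.
Qed.

End MPQTree.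

Section IntervalEdge.
Variables (V : finType) (E : rel V) (T : mpq V) (x y : V) (px py : seq nat)
  (ps : seq ({set V} * option (mpq V))) (a : nat).
Hypotheses (HE : simple_graph E) (HT : mpq_tree E T) (Exy : E x y).
Hypotheses (Hx : node_at T x px) (Hy : node_at T y py).
Hypotheses (Hprefix : prefix px py) (Hpxpy : px != py).
Hypotheses (Hpx : subtree T px = Some (QNode ps)) (Ha : a = (nth 0 py (size px)).+1).
Hypothesis HVa : forall z, z \in Vsub ps a -> z != y -> ~~ E y z.

Notation D := (descents T).
Notation cl d := (path_clique d T).

Lemma take_py : take (size px).+1 py = rcons px a.-1.
Proof.
move: Hprefix; rewrite prefixE => /eqP tpx.
have : size px < size py.
  rewrite ltn_neqAle -{2}tpx size_take_min geq_minr andbT.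
  by apply: contra Hpxpy => /eqP e; rewrite -tpx e take_size.
by move=> pxy; rewrite (take_nth 0 pxy) tpx Ha.
Qed.

Lemma path_clique_y_take d : y \in cl d -> take (size px).+1 d = rcons px a.-1.
Proof.
case/(mem_path_clique_node HT)/(_ Hy) => _ tpy _.
have pxy : (size px).+1 <= size py by rewrite -(size_rcons px a.-1) -take_py size_take_min geq_minr.
by rewrite -(take_takel d pxy) tpy take_py.
Qed.

Lemma exists_descent_y : exists2 dy, dy \in D & y \in cl dy.
Proof.
case: (mpq_clique_path HE HT) => _ /(_ y) + _.
by rewrite cliques_descents => /hasP[_ /mapP[dy hd ->]]; exists dy.
Qed.

Lemma mem_path_clique_sec d c z :
  take (size px).+1 d = rcons px c -> z \in sec ps c.+1 -> z \in cl d.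
Proof.
case/take_succ_rcons => pxd tpx ndx hz; apply: (mem_path_clique_level (j := size px)).
  exact: ltnW.
by rewrite /mem_at_level tpx Hpx pxd ndx.
Qed.

Lemma adjacent_y_common d z : d \in D -> y \in cl d -> z \in cl d -> z != y -> E y z.
Proof.
move=> hd hy hz zy; case: (mpq_clique_path HE HT) => Hedge _ _.
rewrite Hedge 1?eq_sym //; apply/hasP; exists (cl d); last by rewrite hy hz.
by rewrite cliques_descents map_f.
Qed.

Lemma adjacent_y_sec z : z \in sec ps a -> z != y -> E y z.
Proof.
move=> hz zy; have [dy hd hy] := exists_descent_y.
apply: (adjacent_y_common hd hy) zy.
by apply: (mem_path_clique_sec (path_clique_y_take hy)); rewrite prednK // Ha.
Qed.

Lemma adjacent_y_ancestor d z pz : node_at T z pz -> size pz < size px ->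
  z \in cl d -> take (size pz).+1 d = take (size pz).+1 px -> z != y -> E y z && (z != x).
Proof.
move=> hz pzx zd e zy; have [dy hd hy] := exists_descent_y.
apply/andP; split.
  apply: (adjacent_y_common hd hy) zy; apply: (mem_path_clique_take HT hz zd).
  have [_ tpx _] := take_succ_rcons (path_clique_y_take hy).
  by rewrite e -(take_takel dy pzx) tpx.
apply: contraTneq pzx => ezx; subst z.
by rewrite (node_at_uniq HT hz Hx) ltnn.
Qed.

Lemma mem_path_clique_secE d c z : take (size px).+1 d = rcons px c ->
  node_at T z px -> (z \in cl d) = (z \in sec ps c.+1).
Proof.
move=> tpx hz; apply/idP/idP; last exact: mem_path_clique_sec.
have [_ tdx ndx] := take_succ_rcons tpx.
by case/(mem_path_clique_node HT)/(_ hz) => _ _; rewrite /mem_at_level tdx Hpx ndx => /andP[].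
Qed.

Lemma neighbour_y_mem b d : 0 < b -> take (size px).+1 d = rcons px b.-1 ->
  sec ps a :\ x \subset sec ps b ->
  forall z, z != y -> z != x -> E y z -> z \in cl d.
Proof.
move=> b0 tdb hsub z zy zx Eyz.
have [_ tdx _] := take_succ_rcons tdb.
have [dz hdz /andP[hy hz]] : exists2 dz, dz \in D & (y \in cl dz) && (z \in cl dz).
  case: (mpq_clique_path HE HT) => Hedge _ _.
  move: Eyz; rewrite Hedge 1?eq_sym // cliques_descents => /hasP[_ /mapP[dz hdz ->]].
  by exists dz.
have [pz hpz] := exists_node_at HT z.
have tdy := path_clique_y_take hy.
case: (ltngtP (size pz) (size px)) => pzx.
- apply: (mem_path_clique_take HT hpz hz).
  have [_ tdzx _] := take_succ_rcons tdy.
  by rewrite -(take_takel d pzx) tdx -(take_takel dz pzx) tdzx.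
- have tpz : take (size px).+1 pz = rcons px a.-1.
    by rewrite -(take_path_clique_node HT hz hpz pzx) tdy.
  case: hpz (HVa (z := z)) => t [+ zt]; rewrite /Vsub.
  rewrite -(cat_take_drop (size px).+1 pz) tpz -cats1 -catA subtree_cat Hpx /=.
  case: (nth _ ps a.-1).2 => [c|] // st /(_ (allv_subtree st zt) zy).
  by rewrite Eyz.
- have ezx : pz = px.
    rewrite -[pz]take_size -(take_path_clique_node HT hz hpz (leqnn _)) pzx.
    by case: (take_succ_rcons tdy).
  rewrite ezx in hpz.
  rewrite (mem_path_clique_secE tdb hpz) prednK //; apply: (subsetP hsub).
  have a0 : 0 < a by rewrite Ha.
  by rewrite !inE zx -(prednK a0) -(mem_path_clique_secE tdy hpz).
Qed.

Lemma common_vertex_cases b d d' z : 0 < b -> take (size px).+1 d = rcons px b.-1 ->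
  take (size px).+1 d' != rcons px b.-1 -> z != y -> z \in cl d' -> z \in cl d ->
  E y z && (z != x) \/
  [/\ node_at T z px, z \in sec ps b &
      exists2 c, take (size px).+1 d' = rcons px c & z \in sec ps c.+1].
Proof.
move=> b0 tdb nd'b zy hz' hz; have [pxd tdx _] := take_succ_rcons tdb.
have [pz hpz] := exists_node_at HT z.
case: (ltngtP (size pz) (size px)) => pzx.
- left; apply: (adjacent_y_ancestor hpz pzx hz) zy.
  by rewrite -(take_takel d pzx) tdx.
- by rewrite (take_path_clique_node HT hz' hpz pzx) -(take_path_clique_node HT hz hpz pzx) tdb
    eqxx in nd'b.
have ezx : pz = px by rewrite -[pz]take_size -(take_path_clique_node HT hz hpz (leqnn _)) pzx.
rewrite ezx in hpz; right; split => //; first by rewrite -(prednK b0) -(mem_path_clique_secE tdb).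
have td'x : take (size px) d' = px.
  by rewrite (take_path_clique_node HT hz' hpz (leqnn _)) take_size.
have [_ _] := mem_path_clique_node HT hz' hpz.
rewrite /mem_at_level td'x Hpx => /andP[pxd' zc].
by exists (nth 0 d' (size px)); first by rewrite (take_nth 0 pxd') td'x.
Qed.

Lemma adjacent_y_overlap b' b z : sec ps b' :&: sec ps b \subset sec ps a ->
  x \notin sec ps b' -> z \in sec ps b' -> z \in sec ps b -> z != y -> E y z && (z != x).
Proof.
move=> hint xb' zb' zb zy; rewrite adjacent_y_sec //.
  by apply: contraNneq xb' => <-.
by apply: (subsetP hint); rewrite inE zb' zb.
Qed.

Lemma in_node_x : in_node x (QNode ps).
Proof. by case: Hx => t []; rewrite Hpx => -[<-]. Qed.

Lemma lpos_le_size : lpos x ps <= size ps.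
Proof. by rewrite /lpos -has_find; exact: in_node_x. Qed.

Lemma rpos_gt0 : 0 < rpos x ps.
Proof. by rewrite /rpos subn_gt0 -size_rev -has_find has_rev; exact: in_node_x. Qed.

Lemma interval_edge_left b : 0 < b <= lpos x ps -> sec ps a :\ x \subset sec ps b ->
  (1 < b -> sec ps b.-1 :&: sec ps b \subset sec ps a) -> interval_edge E x y.
Proof.
move=> /andP[b0 bl] hsub hint.
have bs : 0 < b <= size ps by rewrite b0 (leq_trans bl lpos_le_size).
have [d0 hd0 td0] := exists_descent_through (mpq_Qnodes_nonempty HT) Hpx bs.
pose P d := take (size px).+1 d == rcons px b.-1.
have hP : has P D by apply/hasP; exists d0; rewrite // /P td0.
set g := find P D.
have gD : g < size D by rewrite -has_find.
have Pg : P (nth [::] D g) := nth_find [::] hP.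
apply: (interval_edge_of_left_gap HE (mpq_clique_path HE HT) Exy (g := g)).
  by move=> z; rewrite nth_cliques_descents //; exact: neighbour_y_mem b0 (eqP Pg) hsub z.
move=> z zy g0; have g1D : g.-1 < size D := leq_ltn_trans (leq_pred g) gD.
rewrite !nth_cliques_descents //.
have nPg' : ~~ P (nth [::] D g.-1).
  have g1g : g.-1 < find P D by rewrite -/g ltn_predL.
  by rewrite (before_find [::] g1g).
have lex : lex_lt (nth [::] D g.-1) (nth [::] D g).
  by move/pairwiseP: (descents_sorted T); apply; rewrite ?inE ?ltn_predL.
move=> hz' hz; case: (common_vertex_cases b0 (eqP Pg) nPg' zy hz' hz) => // -[hzx zb [c tc zc]].
have [pxd' td'x nd'] := take_succ_rcons tc; have [pxd tdx nd] := take_succ_rcons (eqP Pg).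
have cb : c.+1 < b.
  have le : c <= b.-1 by rewrite -nd' -nd; apply: lex_lt_nth_le => //; rewrite td'x tdx.
  have ne : c != b.-1 by apply: contraNneq nPg' => ec; rewrite /P tc ec.
  by clear -le ne; lia.
have zb1 : z \in sec ps b.-1.
  by apply: (mem_sec_between HT hzx Hpx _ _ zc zb); clear -bs cb; lia.
have xb1 : x \notin sec ps b.-1.
  by rewrite (mem_sec_range HT Hx Hpx); clear -bl bs cb; lia.
by apply: (adjacent_y_overlap _ xb1 zb1 zb zy); apply: hint; clear -cb; lia.
Qed.

Lemma interval_edge_right b : rpos x ps <= b <= size ps -> sec ps a :\ x \subset sec ps b ->
  (b < size ps -> sec ps b :&: sec ps b.+1 \subset sec ps a) -> interval_edge E x y.
Proof.
move=> /andP[rb bs] hsub hint.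
have b0 : 0 < b := leq_trans rpos_gt0 rb.
have [d0 hd0 td0] := exists_descent_through (mpq_Qnodes_nonempty HT) Hpx (introT andP (conj b0 bs)).
pose P d := take (size px).+1 d == rcons px b.-1.
have nP0 : ~~ P [::] by rewrite /P /=; case: (px).
have [g /andP[Pg nPg]] : exists g, P (nth [::] D g) && ~~ P (nth [::] D g.+1).
  by apply: (exists_nth_boundary (i0 := index d0 D)) => //; rewrite nth_index // /P td0.
have gD : g < size D by rewrite ltnNge; apply: contraNN nP0 => gD; rewrite nth_default in Pg.
apply: (interval_edge_of_right_gap HE (mpq_clique_path HE HT) Exy (g := g)).
- by rewrite cliques_descents size_map.
- by move=> z; rewrite nth_cliques_descents //; exact: neighbour_y_mem b0 (eqP Pg) hsub z.
move=> z zy; rewrite cliques_descents size_map => g1; rewrite -!cliques_descents.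
rewrite !nth_cliques_descents // => hz hz'.
have lex : lex_lt (nth [::] D g) (nth [::] D g.+1).
  by move/pairwiseP: (descents_sorted T); apply; rewrite ?inE // ltnW.
case: (common_vertex_cases b0 (eqP Pg) nPg zy hz' hz) => // -[hzx zb [c tc zc]].
have [pxd' td'x nd'] := take_succ_rcons tc; have [pxd tdx nd] := take_succ_rcons (eqP Pg).
have bc : b <= c.
  have le : b.-1 <= c by rewrite -nd' -nd; apply: lex_lt_nth_le => //; rewrite td'x tdx.
  have ne : c != b.-1 by apply: contraNneq nPg => ec; rewrite /P tc ec.
  by clear -le ne b0; lia.
have cs : c < size ps by rewrite ltnNge; apply: contraTN zc => cs; rewrite /sec nth_default // inE.
have zb1 : z \in sec ps b.+1.
  by apply: (mem_sec_between HT hzx Hpx _ _ zb zc); clear -b0 bc cs; lia.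
have xb1 : x \notin sec ps b.+1.
  by rewrite (mem_sec_range HT Hx Hpx); clear -rb bc cs; lia.
by apply: (adjacent_y_overlap _ xb1 zb1 zb zy); rewrite setIC hint //; clear -bc cs; lia.
Qed.

End IntervalEdge.

Theorem mainTheorem7 (V : finType) (E : rel V) (T : mpq V) (x y : V)
    (px py : seq nat) (ps : seq ({set V} * option (mpq V))) (a : nat) :
  simple_graph E -> interval_graph E -> mpq_tree E T ->
  E x y -> node_at T x px -> node_at T y py ->
  prefix px py -> px != py ->
  almost_rotable T px py ->
  starts_in_central T x px py ps a ->
  (forall z, z \in Vsub ps a -> z != y -> ~~ E y z) ->
  [\/ exists b, [/\ 1 < b <= lpos x ps, sec ps a :\ x \subset sec ps b &
                     sec ps b.-1 :&: sec ps b \subset sec ps a],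
      exists b, [/\ rpos x ps <= b < size ps, sec ps a :\ x \subset sec ps b &
                     sec ps b :&: sec ps b.+1 \subset sec ps a],
      sec ps a :\ x \subset sec ps 1 |
      sec ps a :\ x \subset sec ps (size ps)] ->
  interval_edge E x y.
Proof.
move=> HE _ HT Exy Hx Hy Hprefix Hpxpy _ [Hpx Ha _] HVa.
have left := interval_edge_left HE HT Exy Hx Hy Hprefix Hpxpy Hpx Ha HVa.
have right := interval_edge_right HE HT Exy Hx Hy Hprefix Hpxpy Hpx Ha HVa.
case=> [[b [/andP[b1 bl] hsub hint]] | [b [/andP[rb bs] hsub hint]] | hsub | hsub].
- by apply: (left b) => //; rewrite bl ltnW.
- by apply: (right b) => //; rewrite rb ltnW.
- by apply: (left 1).
- apply: (right (size ps)) => //; last by rewrite ltnn.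
  by rewrite /rpos leq_subr leqnn.
Qed.
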